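(* Let $M$ be a model. (1) For every history formula $\varphi$ of CTL*KΔ, every history $h$ and every observation record $r$ that stops at $h$: $h,r\models\varphi$ iff $\mathit{last}(h),\mathit{IS}(h,r),o(h,r)\models_I\varphi$. (2) For every path formula $\psi$, every path $\pi$, every $n\in\mathbb N$ and every observation record $r$ that stops at $n$: $\pi,n,r\models\psi$ iff $\pi_{\ge n},\ \mathit{IS}(\pi_{\le n},r),\ o(\pi_{\le n},r)\models_I\psi$.
   Context: Fix a countably infinite set $\mathit{AP}$ of atomic propositions and a finite nonempty set $\mathit{Obs}$ of observations. For a word $w$ we write $w_i$ for its letter at position $i$ (positions start at $0$), $w_{\le i}$ for its prefix ending at position $i$, $w_{\ge i}$ for its suffix starting at position $i$, $|w|$ for the length of a finite word, and $\mathit{last}(w)$ for the last letter of a finite word; $w\preceq w'$ means $w$ is a prefix of $w'$. Syntax of CTL*KΔ (single agent): history formulas $\varphi::=p\mid\neg\varphi\mid\varphi\wedge\varphi\mid\mathbf A\psi\mid\mathbf K\varphi\mid\Delta^{o}\varphi$ and path formulas $\psi::=\varphi\mid\neg\psi\mid\psi\wedge\psi\mid\mathbf X\psi\mid\psi\,\mathbf U\,\psi$, with $p\in\mathit{AP}$ and $o\in\mathit{Obs}$; the formulas of the logic are the history formulas. A model is $M=(\mathit{AP}_f,S,T,V,\{\sim_o\}_{o\in\mathit{Obs}},s_\iota,o_\iota)$ where $\mathit{AP}_f\subseteq\mathit{AP}$ is finite, $S$ is a finite set of states, $T\subseteq S\times S$ is left-total, $V:S\to 2^{\mathit{AP}_f}$,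 each $\sim_o$ is an equivalence relation on $S$, $s_\iota\in S$ and $o_\iota\in\mathit{Obs}$. A path is an infinite sequence $\pi=s_0s_1\dots$ of states with $s_i\,T\,s_{i+1}$ for all $i$ (starting at any state); a history is a finite nonempty prefix of a path. An observation record is a finite word over $\mathit{Obs}\times\mathbb N$; $\epsilon$ is the empty record, $r\cdot(o,n)$ is $r$ with $(o,n)$ appended, and $r_{=n}$ is the subword of $r$ consisting of the pairs whose second component is $n$. The record $r$ stops at $n$ if $r_{=m}$ is empty for all $m>n$, and stops at a history $h$ if it stops at $|h|-1$. The list $\mathit{ol}(r,n)$ is defined by $\mathit{ol}(r,0)=o_\iota\cdot o_1\cdots o_k$ if $r_{=0}=(o_1,0)\cdots(o_k,0)$, and $\mathit{ol}(r,n+1)=\mathit{last}(\mathit{ol}(r,n))\cdot o_1\cdots o_k$ if $r_{=n+1}=(o_1,n+1)\cdots(o_k,n+1)$. Two histories are equivalent, $h\approx_r h'$, if $|h|=|h'|$ and for every $i<|h|$ and every $o$ occurring in $\mathit{ol}(r,i)$, $h_i\sim_o h'_i$. Natural semantics: for a history $h$ and record $r$: $h,r\models p$ iff $p\in V(\mathit{last}(h))$; $h,r\models\neg\varphi$ iff not $h,r\models\varphi$; $h,r\models\varphi_1\wedge\varphi_2$ iff both hold; $h,r\models\mathbf A\psi$ iff for all paths $\pi$ with $h\preceq\pi$, $\pi,|h|-1,r\models\psi$; $h,r\models\mathbf K\varphi$ iff $h',r\models\varphi$ for all histories $h'$ with $h'\approx_r h$; $h,r\models\Delta^o\varphi$ iff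 $h,r\cdot(o,|h|-1)\models\varphi$. For a path $\pi$, $n\in\mathbb N$ and record $r$: $\pi,n,r\models\varphi$ iff $\pi_{\le n},r\models\varphi$; negation and conjunction as usual; $\pi,n,r\models\mathbf X\psi$ iff $\pi,n+1,r\models\psi$; $\pi,n,r\models\psi_1\mathbf U\psi_2$ iff there is $m\ge n$ with $\pi,m,r\models\psi_2$ and $\pi,k,r\models\psi_1$ for all $n\le k<m$. For $I\subseteq S$, $T(I)=\{s'\mid\exists s\in I,\ s\,T\,s'\}$; $[s]_o=\{s'\mid s\sim_o s'\}$. The information set is $\mathit{IS}(h,r)=\{\mathit{last}(h')\mid h'\text{ a history with }h'\approx_r h\}$. Updates: $U_T(I,s',o)=T(I)\cap[s']_o$ and $U_\Delta(I,s,o')=I\cap[s]_{o'}$. $o(h,r)$ denotes the last element of $\mathit{ol}(r,|h|-1)$. Alternative semantics, for $s\in S$, $I\subseteq S$, $o\in\mathit{Obs}$: $s,I,o\models_I p$ iff $p\in V(s)$; negation and conjunction as usual; $s,I,o\models_I\mathbf A\psi$ iff for every path $\pi$ with $\pi_0=s$, $\pi,I,o\models_I\psi$; $s,I,o\models_I\mathbf K\varphi$ iff $s',I,o\models_I\varphi$ for all $s'\in I$; $s,I,o\models_I\Delta^{o'}\varphi$ iff $s,U_\Delta(I,s,o'),o'\models_I\varphi$. For a path $\pi$: $\pi,I,o\models_I\varphi$ iff $\pi_0,I,o\models_I\varphi$; negation and conjunction as usual; $\pi,I,o\models_I\mathbf X\psi$ iff $\pi_{\ge1},U_T(I,\pi_1,o),o\models_I\psi$;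 $\pi,I,o\models_I\psi_1\mathbf U\psi_2$ iff there is $n\ge0$ with $\pi_{\ge n},U_T^n(I,\pi,o),o\models_I\psi_2$ and $\pi_{\ge m},U_T^m(I,\pi,o),o\models_I\psi_1$ for all $0\le m<n$, where $U_T^0(I,\pi,o)=I$ and $U_T^{n+1}(I,\pi,o)=U_T(U_T^n(I,\pi,o),\pi_{n+1},o)$. *)

From mathcomp Require Import all_boot.

Set Implicit Arguments.
Unset Strict Implicit.
Unset Printing Implicit Defensive.

(* Atomic propositions AP = nat (countably infinite).
   Observations: a finite type Obs (nonempty since every model has o_iota). *)

Record model (Obs : finType) := Model {
  APf : seq nat;
  st : finType;
  trans : rel st;
  trans_total : forall s, exists s', trans s s';
  val : st -> pred nat;
  val_APf : forall s p, val s p -> p \in APf;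
  sim : Obs -> rel st;
  sim_refl : forall o, reflexive (sim o);
  sim_sym : forall o, symmetric (sim o);
  sim_trans : forall o, transitive (sim o);
  s_init : st;
  o_init : Obs
}.

Inductive hform (Obs : Type) : Type :=
| HAtom : nat -> hform Obs
| HNot : hform Obs -> hform Obs
| HAnd : hform Obs -> hform Obs -> hform Obs
| HA : pform Obs -> hform Obs
| HK : hform Obs -> hform Obs
| HDelta : Obs -> hform Obs -> hform Obs
with pform (Obs : Type) : Type :=
| PH : hform Obs -> pform Obs
| PNot : pform Obs -> pform Obs
| PAnd : pform Obs -> pform Obs -> pform Obs
| PX : pform Obs -> pform Obs
| PU : pform Obs -> pform Obs -> pform Obs.

Section Semantics.
Variable Obs : finType.
Variable M : model Obs.
Notation S := (st M).

Definition record := seq (Obs * nat).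

Definition rec_at (r : record) (n : nat) : record := [seq p <- r | p.2 == n].

Definition stops_at (r : record) (n : nat) : Prop :=
  forall m, n < m -> rec_at r m = [::].

Definition stops_at_hist (r : record) (h : seq S) : Prop := stops_at r (size h).-1.

Fixpoint ol (r : record) (n : nat) : seq Obs :=
  match n with
  | 0 => @o_init _ M :: map fst (rec_at r 0)
  | m.+1 => last (@o_init _ M) (ol r m) :: map fst (rec_at r m.+1)
  end.

Definition is_path (pi : nat -> S) : Prop := forall i, trans (pi i) (pi i.+1).

Definition prefix_of (h : seq S) (pi : nat -> S) : Prop := h = mkseq pi (size h).

Definition is_history (h : seq S) : Prop :=
  0 < size h /\ exists pi, is_path pi /\ prefix_of h pi.

Definition hlast (h : seq S) : S := last (@s_init _ M) h.

Definition upto (pi : nat -> S) (n : nat) : seq S := mkseq pi n.+1.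
Definition from (pi : nat -> S) (n : nat) : nat -> S := fun i => pi (n + i).

Definition hequiv (r : record) (h h' : seq S) : Prop :=
  size h = size h' /\
  forall i, i < size h -> forall o, o \in ol r i ->
    @sim _ M o (nth (@s_init _ M) h i) (nth (@s_init _ M) h' i).

Definition IS (h : seq S) (r : record) : S -> Prop :=
  fun s => exists h', is_history h' /\ hequiv r h' h /\ hlast h' = s.

Definition ocur (h : seq S) (r : record) : Obs := last (@o_init _ M) (ol r (size h).-1).

Fixpoint hsat (f : hform Obs) (h : seq S) (r : record) {struct f} : Prop :=
  match f with
  | HAtom p => val (hlast h) p
  | HNot f1 => ~ hsat f1 h r
  | HAnd f1 f2 => hsat f1 h r /\ hsat f2 h r
  | HA g => forall pi, is_path pi -> prefix_of h pi -> psat g pi (size h).-1 r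
  | HK f1 => forall h', is_history h' -> hequiv r h' h -> hsat f1 h' r
  | HDelta o f1 => hsat f1 h (rcons r (o, (size h).-1))
  end
with psat (g : pform Obs) (pi : nat -> S) (n : nat) (r : record) {struct g} : Prop :=
  match g with
  | PH f => hsat f (upto pi n) r
  | PNot g1 => ~ psat g1 pi n r
  | PAnd g1 g2 => psat g1 pi n r /\ psat g2 pi n r
  | PX g1 => psat g1 pi n.+1 r
  | PU g1 g2 => exists m, n <= m /\ psat g2 pi m r /\
                  forall k, n <= k -> k < m -> psat g1 pi k r
  end.

Definition Tset (I : S -> Prop) : S -> Prop := fun s' => exists s, I s /\ trans s s'.
Definition UT (I : S -> Prop) (s' : S) (o : Obs) : S -> Prop :=
  fun x => Tset I x /\ @sim _ M o s' x.
Definition UD (I : S -> Prop) (s : S) (o' : Obs) : S -> Prop :=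
  fun x => I x /\ @sim _ M o' s x.

Fixpoint UTn (n : nat) (I : S -> Prop) (pi : nat -> S) (o : Obs) : S -> Prop :=
  match n with
  | 0 => I
  | m.+1 => UT (UTn m I pi o) (pi m.+1) o
  end.

Fixpoint isat (f : hform Obs) (s : S) (I : S -> Prop) (o : Obs) {struct f} : Prop :=
  match f with
  | HAtom p => val s p
  | HNot f1 => ~ isat f1 s I o
  | HAnd f1 f2 => isat f1 s I o /\ isat f2 s I o
  | HA g => forall pi, is_path pi -> pi 0 = s -> ipsat g pi I o
  | HK f1 => forall s', I s' -> isat f1 s' I o
  | HDelta o' f1 => isat f1 s (UD I s o') o'
  end
with ipsat (g : pform Obs) (pi : nat -> S) (I : S -> Prop) (o : Obs) {struct g} : Prop :=
  match g with
  | PH f => isat f (pi 0) I o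
  | PNot g1 => ~ ipsat g1 pi I o
  | PAnd g1 g2 => ipsat g1 pi I o /\ ipsat g2 pi I o
  | PX g1 => ipsat g1 (from pi 1) (UT I (pi 1) o) o
  | PU g1 g2 => exists n, ipsat g2 (from pi n) (UTn n I pi o) o /\
                  forall m, m < n -> ipsat g1 (from pi m) (UTn m I pi o) o
  end.

End Semantics.

From mathcomp Require Import all_boot.
From Stdlib Require Import FunctionalExtensionality PropExtensionality.

Set Implicit Arguments.
Unset Strict Implicit.
Unset Printing Implicit Defensive.

(** By simultaneous induction on formulas, once one checks that the
    information set and the current observation of a history evolve exactly as
    the alternative semantics prescribes: a [Delta^o] step appends [(o, |h|-1)]
    to the record, which restricts the information set to the [~_o]-class of
    the current state ([U_Delta]) and makes [o] current; a temporal step of a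
    record that has stopped adds no new observation, so the information set is
    updated by [U_T] with the unchanged current observation.  For [U_T] the
    converse inclusion needs that any state reachable in one step from an
    indistinguishable history continues some path, which holds since [T] is
    left-total. *)

Lemma pred_ext (T : Type) (P Q : T -> Prop) : (forall x, P x <-> Q x) -> P = Q.
Proof.
by move=> PQ; apply: functional_extensionality => x; apply: propositional_extensionality.
Qed.

Lemma last_mkseq (T : Type) (x0 : T) (f : nat -> T) n : last x0 (mkseq f n.+1) = f n.
Proof. by rewrite -nth_last size_mkseq nth_mkseq. Qed.

Lemma exists_until_shift (P Q : nat -> Prop) n :
  (exists m, n <= m /\ Q m /\ forall k, n <= k -> k < m -> P k) <->
  (exists j, Q (n + j) /\ forall i, i < j -> P (n + i)).
Proof.
split=> [[m [le_nm [Qm Pk]]] | [j [Qj Pi]]].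
- exists (m - n); rewrite subnKC //; split=> // i lt_ij.
  by apply: Pk; rewrite ?leq_addr // -ltn_subRL.
- exists (n + j); split; rewrite ?leq_addr //; split=> // k le_nk lt_km.
  by rewrite -(subnKC le_nk); apply: Pi; rewrite ltn_subLR.
Qed.

Section Records.
Variables (Obs : finType) (M : model Obs).
Implicit Type r : record Obs.

Lemma rec_at_rcons_neq r o n m : m != n -> rec_at (rcons r (o, n)) m = rec_at r m.
Proof. by move=> ne_mn; rewrite /rec_at filter_rcons /= eq_sym (negbTE ne_mn). Qed.

Lemma ol_rcons_lt r o n i : i < n -> ol M (rcons r (o, n)) i = ol M r i.
Proof.
elim: i => [|i IHi] lt_in /=; first by rewrite rec_at_rcons_neq // neq_ltn lt_in.
by rewrite IHi ?(ltnW lt_in) // rec_at_rcons_neq // neq_ltn lt_in.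
Qed.

Lemma ol_rcons_eq r o n : ol M (rcons r (o, n)) n = rcons (ol M r n) o.
Proof.
have rec_n : rec_at (rcons r (o, n)) n = rcons (rec_at r n) (o, n).
  by rewrite /rec_at filter_rcons /= eqxx.
by case: n rec_n => [|n] rec_n /=; rewrite rec_n map_rcons ?ol_rcons_lt.
Qed.

Lemma stops_at_rcons r o n : stops_at r n -> stops_at (rcons r (o, n)) n.
Proof. by move=> stop_n m lt_nm; rewrite rec_at_rcons_neq ?gtn_eqF ?stop_n. Qed.

Lemma stops_at_le r n m : stops_at r n -> n <= m -> stops_at r m.
Proof. by move=> stop_n le_nm k lt_mk; apply: stop_n; apply: leq_ltn_trans lt_mk. Qed.

Lemma ol_stopped r n : stops_at r n -> ol M r n.+1 = [:: last (o_init M) (ol M r n)].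
Proof. by move=> stop_n /=; rewrite stop_n. Qed.

End Records.

Section InformationSets.
Variables (Obs : finType) (M : model Obs).
Notation S := (st M).
Notation s0 := (s_init M).
Implicit Types (r : record Obs) (h : seq S) (pi : nat -> S).

Lemma path_from (s : S) : exists pi, is_path pi /\ pi 0 = s.
Proof.
pose next (x : S) := xchoose (trans_total x).
by exists (fun i => iter i next s); split=> // i; rewrite iterS; apply: xchooseP.
Qed.

Definition glue pi n (q : nat -> S) : nat -> S :=
  fun i => if i <= n then pi i else q (i - n.+1).

Lemma glue_path pi n q :
  is_path pi -> is_path q -> trans (pi n) (q 0) -> is_path (glue pi n q).
Proof.
move=> path_pi path_q step_n i; rewrite /glue.
case: (ltngtP i n) => [lt_in | lt_ni | ->]; first exact: path_pi.
- by rewrite subSn //; apply: path_q.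
- by rewrite subnn.
Qed.

Lemma from_from pi n j : from (from pi n) j = from pi (n + j).
Proof. by apply: functional_extensionality => i; rewrite /from addnA. Qed.

Lemma hlast_upto pi n : hlast (upto pi n) = pi n.
Proof. exact: last_mkseq. Qed.

Lemma upto_history pi n : is_path pi -> is_history (upto pi n).
Proof.
by move=> path_pi; split; rewrite ?size_mkseq //; exists pi; rewrite /prefix_of size_mkseq.
Qed.

Lemma prefix_upto h pi : 0 < size h -> prefix_of h pi -> h = upto pi (size h).-1.
Proof. by move=> h_gt0 ->; rewrite size_mkseq /upto prednK. Qed.

Lemma extend_history h pi' :
  is_history h -> is_path pi' -> pi' 0 = hlast h ->
  exists2 pi, is_path pi /\ prefix_of h pi & from pi (size h).-1 = pi'.
Proof.
move=> [h_gt0 [p [path_p pre_p]]] path_pi' pi'0.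
set n := (size h).-1; have hE : h = upto p n := prefix_upto h_gt0 pre_p.
exists (glue p n (from pi' 1)); first split.
- apply: glue_path => // [i | ]; first exact: path_pi'.
  by rewrite -(hlast_upto p n) -hE -pi'0; apply: path_pi'.
- rewrite /prefix_of {1}hE /upto -(prednK h_gt0); apply/eq_in_map => i.
  by rewrite mem_iota => /andP [_ lt_in]; rewrite /glue -ltnS lt_in.
- apply: functional_extensionality => -[|i]; rewrite /from /glue.
    by rewrite addn0 leqnn -(hlast_upto p n) -hE pi'0.
  by rewrite addnS ltnNge leq_addr /= subSS addKn.
Qed.

Lemma ISP h r x : 0 < size h ->
  IS h r x <-> exists p, is_path p /\
    (forall i, i < size h -> forall o, o \in ol M r i -> sim o (p i) (nth s0 h i)) /\
    p (size h).-1 = x.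
Proof.
move=> h_gt0; split.
- case=> h' [[h'_gt0 [p [path_p pre_p]]] [[sz_h' sim_h'] <-]].
  exists p; split=> //; split.
  + move=> i lt_ih o o_i; rewrite -sz_h' in lt_ih.
    by have := sim_h' i lt_ih o o_i; rewrite pre_p nth_mkseq.
  + by have := hlast_upto p (size h').-1; rewrite -prefix_upto // sz_h'.
- case=> p [path_p [sim_p <-]]; exists (mkseq p (size h)); split; last split.
  + by split; [rewrite size_mkseq | exists p; rewrite /prefix_of size_mkseq].
  + by split=> [|i]; rewrite size_mkseq // => lt_ih o o_i; rewrite nth_mkseq ?sim_p.
  + by rewrite /hlast -(prednK h_gt0) last_mkseq.
Qed.

Lemma hequiv_sym r h h' : hequiv r h h' -> hequiv r h' h.
Proof. by case=> sz_h sim_h; split=> // i lt_i o o_i; rewrite sim_sym sim_h ?sz_h. Qed.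

Lemma hequiv_trans r h1 h2 h3 : hequiv r h1 h2 -> hequiv r h2 h3 -> hequiv r h1 h3.
Proof.
case=> sz12 sim12 [sz23 sim23]; split=> [|i lt_i o o_i]; first by rewrite sz12.
by apply: sim_trans (sim12 i lt_i o o_i) _; rewrite sim23 -?sz12.
Qed.

Lemma IS_hequiv r h h' : hequiv r h' h -> IS h' r = IS h r.
Proof.
move=> eq_h'h; apply: pred_ext => x.
split=> -[h'' [hist_h'' [eq_h'' last_h'']]]; exists h''; split=> //; split=> //.
- exact: hequiv_trans eq_h'' eq_h'h.
- exact: hequiv_trans eq_h'' (hequiv_sym eq_h'h).
Qed.

Lemma IS_rcons h r o : 0 < size h ->
  IS h (rcons r (o, (size h).-1)) = UD (IS h r) (hlast h) o.
Proof.
move=> h_gt0; apply: pred_ext => x; rewrite /UD !ISP //.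
set n := (size h).-1; have lt_nh : n < size h by rewrite prednK.
have hlastE : hlast h = nth s0 h n by rewrite /hlast nth_last.
have lt_n_or_eq i : i < size h -> i < n \/ i = n.
  by rewrite -(prednK h_gt0) ltnS leq_eqVlt => /orP [/eqP|]; [right|left].
split=> [[p [path_p [sim_p px]]] | [[p [path_p [sim_p px]]] sim_x]].
- split; first (exists p; split=> //; split=> // i lt_ih o' o'_i).
  + case: (lt_n_or_eq i lt_ih) o'_i => [lt_in | ->] o'_i; apply: sim_p => //.
      by rewrite ol_rcons_lt.
    by rewrite ol_rcons_eq mem_rcons inE o'_i orbT.
  + rewrite hlastE -px sim_sym; apply: sim_p => //.
    by rewrite ol_rcons_eq mem_rcons inE eqxx.
- exists p; split=> //; split=> // i lt_ih o'.
  case: (lt_n_or_eq i lt_ih) => [lt_in | ->]; first by rewrite ol_rcons_lt //; apply: sim_p.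
  rewrite ol_rcons_eq mem_rcons inE => /orP [/eqP -> | o'_n]; last exact: sim_p.
  by rewrite px -hlastE sim_sym.
Qed.

Lemma ocur_rcons h r o : ocur h (rcons r (o, (size h).-1)) = o.
Proof. by rewrite /ocur ol_rcons_eq last_rcons. Qed.

Lemma ocur_upto pi n r : ocur (upto pi n) r = last (o_init M) (ol M r n).
Proof. by rewrite /ocur size_mkseq. Qed.

Lemma ocur_upto_add pi n j r :
  stops_at r n -> ocur (upto pi (n + j)) r = ocur (upto pi n) r.
Proof.
move=> stop_n; elim: j => [|j IHj]; first by rewrite addn0.
rewrite addnS -IHj !ocur_upto ol_stopped //; exact: stops_at_le stop_n (leq_addr _ _).
Qed.

Lemma IS_upto_succ pi n r : stops_at r n ->
  IS (upto pi n.+1) r = UT (IS (upto pi n) r) (pi n.+1) (ocur (upto pi n) r).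
Proof.
move=> stop_n; apply: pred_ext => x; rewrite /UT /Tset ISP ?size_mkseq //=.
have ol_succ o : (o \in ol M r n.+1) = (o == ocur (upto pi n) r).
  by rewrite ol_stopped // inE ocur_upto.
split=> [[p [path_p [sim_p px]]] | [[s [IS_s step_s]] sim_x]].
- split; last by rewrite -px sim_sym; have := sim_p n.+1 (ltnSn _); rewrite nth_mkseq //; apply; rewrite ol_succ.
  exists (p n); split; last by rewrite -px; apply: path_p.
  rewrite ISP ?size_mkseq //=; exists p; split=> //; split=> // i lt_in o o_i.
  by have := sim_p i (ltnW lt_in) o o_i; rewrite /upto !nth_mkseq // ltnW.
- move: IS_s; rewrite ISP ?size_mkseq //= => -[p [path_p [sim_p ps]]].
  have [q [path_q q0]] := path_from x.
  exists (glue p n q); split; first by apply: glue_path; rewrite ?ps ?q0.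
  split=> [i lt_in o|]; last by rewrite /glue ltnn subnn.
  rewrite nth_mkseq // /glue; case: (leqP i n) => [le_in | lt_ni].
  + by move=> o_i; have := sim_p i le_in o o_i; rewrite nth_mkseq.
  + have -> : i = n.+1 by apply/eqP; rewrite eqn_leq lt_ni -ltnS lt_in.
    by rewrite ol_succ subnn q0 sim_sym => /eqP ->.
Qed.

Lemma IS_upto_add pi n j r : stops_at r n ->
  IS (upto pi (n + j)) r = UTn j (IS (upto pi n) r) (from pi n) (ocur (upto pi n) r).
Proof.
move=> stop_n; elim: j => [|j IHj]; first by rewrite addn0.
have stop_nj : stops_at r (n + j) := stops_at_le stop_n (leq_addr _ _).
by rewrite addnS IS_upto_succ // ocur_upto_add // IHj /= /from addnS.
Qed.

End InformationSets.

Section Agreement.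
Variables (Obs : finType) (M : model Obs).
Notation S := (st M).

Definition hform_agrees (phi : hform Obs) : Prop :=
  forall (h : seq S) (r : record Obs), is_history h -> stops_at_hist r h ->
    (hsat phi h r <-> isat phi (hlast h) (IS h r) (ocur h r)).

Definition pform_agrees (psi : pform Obs) : Prop :=
  forall (pi : nat -> S) (n : nat) (r : record Obs), is_path pi -> stops_at r n ->
    (psat psi pi n r <-> ipsat psi (from pi n) (IS (upto pi n) r) (ocur (upto pi n) r)).

Lemma hform_agrees_A psi : pform_agrees psi -> hform_agrees (HA psi).
Proof.
move=> IH h r hist_h stop_h /=; have h_gt0 := proj1 hist_h.
split=> [sat_h pi' path_pi' pi'0 | sat_last pi path_pi pre_pi].
- have [pi [path_pi pre_pi] <-] := extend_history hist_h path_pi' pi'0.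
  by have := sat_h pi path_pi pre_pi; rewrite IH // -prefix_upto.
- rewrite IH // -prefix_upto //; apply: sat_last => [i|].
    by rewrite /from addnS; apply: path_pi.
  by rewrite /from addn0 {2}(prefix_upto h_gt0 pre_pi) hlast_upto.
Qed.

Lemma hform_agrees_K phi : hform_agrees phi -> hform_agrees (HK phi).
Proof.
move=> IH h r hist_h stop_h /=.
have agrees_equiv h' : is_history h' -> hequiv r h' h ->
    hsat phi h' r <-> isat phi (hlast h') (IS h r) (ocur h r).
  move=> hist_h' eq_h'h; have sz_h' := proj1 eq_h'h.
  by rewrite IH ?(IS_hequiv eq_h'h) /ocur ?sz_h' // /stops_at_hist sz_h'.
split=> [sat_h s [h' [hist_h' [eq_h'h <-]]] | sat_I h' hist_h' eq_h'h].
- by rewrite -agrees_equiv //; apply: sat_h.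
- by rewrite agrees_equiv //; apply: sat_I; exists h'.
Qed.

Lemma hform_agrees_Delta o phi : hform_agrees phi -> hform_agrees (HDelta o phi).
Proof.
move=> IH h r hist_h stop_h /=.
by rewrite IH ?IS_rcons ?ocur_rcons //; [case: hist_h | apply: stops_at_rcons].
Qed.

Lemma pform_agrees_H phi : hform_agrees phi -> pform_agrees (PH phi).
Proof.
move=> IH pi n r path_pi stop_n /=.
rewrite IH ?hlast_upto /from ?addn0 //; first exact: upto_history.
by rewrite /stops_at_hist size_mkseq.
Qed.

Lemma pform_agrees_from psi (pi : nat -> S) n r :
  pform_agrees psi -> is_path pi -> stops_at r n -> forall j,
  psat psi pi (n + j) r <->
  ipsat psi (from (from pi n) j) (UTn j (IS (upto pi n) r) (from pi n) (ocur (upto pi n) r))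
    (ocur (upto pi n) r).
Proof.
move=> IH path_pi stop_n j.
by rewrite IH ?from_from ?IS_upto_add ?ocur_upto_add //; apply: stops_at_le (leq_addr _ _).
Qed.

Lemma pform_agrees_X psi : pform_agrees psi -> pform_agrees (PX psi).
Proof. by move=> IH pi n r path_pi stop_n /=; rewrite -addn1 pform_agrees_from. Qed.

Lemma pform_agrees_U psi1 psi2 :
  pform_agrees psi1 -> pform_agrees psi2 -> pform_agrees (PU psi1 psi2).
Proof.
move=> IH1 IH2 pi n r path_pi stop_n /=; rewrite exists_until_shift.
have agrees1 := pform_agrees_from IH1 path_pi stop_n.
have agrees2 := pform_agrees_from IH2 path_pi stop_n.
by split=> -[j [/agrees2 sat2 sat1]]; exists j; split=> // i /sat1 /agrees1.
Qed.

End Agreement.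

Scheme hform_ind2 := Induction for hform Sort Prop
  with pform_ind2 := Induction for pform Sort Prop.
Combined Scheme form_ind from hform_ind2, pform_ind2.

Theorem mainTheorem3 (Obs : finType) (M : model Obs) :
  (forall (phi : hform Obs) (h : seq (st M)) (r : record Obs),
      is_history h -> stops_at_hist r h ->
      (hsat phi h r <-> isat phi (hlast h) (IS h r) (ocur h r))) /\
  (forall (psi : pform Obs) (pi : nat -> st M) (n : nat) (r : record Obs),
      is_path pi -> stops_at r n ->
      (psat psi pi n r <->
       ipsat psi (from pi n) (IS (upto pi n) r) (ocur (upto pi n) r))).
Proof.
apply: (form_ind (P := @hform_agrees _ M) (P0 := @pform_agrees _ M)).
- by [].
- by move=> phi IH h r hist_h stop_h /=; rewrite IH.
- by move=> phi1 IH1 phi2 IH2 h r hist_h stop_h /=; rewrite IH1 // IH2.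
- exact: hform_agrees_A.
- exact: hform_agrees_K.
- exact: hform_agrees_Delta.
- exact: pform_agrees_H.
- by move=> psi IH pi n r path_pi stop_n /=; rewrite IH.
- by move=> psi1 IH1 psi2 IH2 pi n r path_pi stop_n /=; rewrite IH1 // IH2.
- exact: pform_agrees_X.
- by move=> psi1 IH1 psi2 IH2; apply: pform_agrees_U.
Qed.
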